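(* Let $\mathcal N$ be a $d$-dimensional real normed space with norm $\|\cdot\|$, let $k\in\mathbb N$, and let $c_1,\dots,c_m$ be $m$ distinct points of $\mathcal N$, with $m\geq 2$ and $m\geq k+1$. Then the $k$-th closed sphere-of-influence graph on $\{c_1,\dots,c_m\}$ has at least two vertices of degree smaller than $\vartheta(\mathcal N)\,k$, and $\vartheta(\mathcal N)\,k\leq 5^d k$.
   Context: For $c\in\mathcal N$ and $r\geq 0$, $B(c,r)=\{x\in\mathcal N:\|x-c\|\leq r\}$ is the closed ball. For each $i\in\{1,\dots,m\}$, let $r_i^{(k)}$ be the smallest $r$ such that the set $\{j\in\{1,\dots,m\}: j\neq i,\ \|c_i-c_j\|\leq r\}$ has at least $k$ elements (this requires $m\geq k+1$). The $k$-th closed sphere-of-influence graph on $\{c_1,\dots,c_m\}$ has vertex set $\{c_1,\dots,c_m\}$, and $c_i$, $c_j$ ($i\neq j$) are adjacent whenever $B(c_i,r_i^{(k)})\cap B(c_j,r_j^{(k)})\neq\emptyset$. The quantity $\vartheta(\mathcal N)$ is the largest number of points in the ball $B(o,2)$ ($o$ the origin) such that any two of the points are at distance at least $1$ and one of the points is $o$. *)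

From HB Require Import structures.
From mathcomp Require Import all_boot all_order all_algebra.
From mathcomp Require Import boolp classical_sets reals.
Set Implicit Arguments. Unset Strict Implicit. Unset Printing Implicit Defensive.
Import Order.TTheory GRing.Theory Num.Theory.
Local Open Scope ring_scope.

(* A d-dimensional real normed space is modelled (up to linear isometry)
   as 'rV[R]_d equipped with an arbitrary norm N. *)
Definition is_norm (R : realType) (d : nat) (N : 'rV[R]_d -> R) : Prop :=
  [/\ forall x, N x = 0 -> x = 0,
      forall (a : R) x, N (a *: x) = `|a| * N x
    & forall x y, N (x + y) <= N x + N y].

Definition cball (R : realType) (d : nat) (N : 'rV[R]_d -> R)
  (c : 'rV[R]_d) (r : R) : set 'rV[R]_d := [set x | N (x - c) <= r].

Definition nb_within (R : realType) (d m : nat) (N : 'rV[R]_d -> R)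
  (c : 'I_m -> 'rV[R]_d) (i : 'I_m) (r : R) : nat :=
  #|[set j : 'I_m | (j != i) && (N (c i - c j) <= r)]|.

(* r_i^{(k)} : the smallest r >= 0 with at least k other centres within r
   (the set is an up-closed ray [r_i^{(k)}, oo), so its infimum is its minimum) *)
Definition rk (R : realType) (d m : nat) (N : 'rV[R]_d -> R)
  (c : 'I_m -> 'rV[R]_d) (k : nat) (i : 'I_m) : R :=
  inf [set r : R | 0 <= r /\ (k <= nb_within N c i r)%N].

Definition csig_adj (R : realType) (d m : nat) (N : 'rV[R]_d -> R)
  (c : 'I_m -> 'rV[R]_d) (k : nat) (i j : 'I_m) : Prop :=
  i <> j /\
  ((cball N (c i) (rk N c k i) `&` cball N (c j) (rk N c k j)) !=set0)%classic.

Definition csig_deg (R : realType) (d m : nat) (N : 'rV[R]_d -> R)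
  (c : 'I_m -> 'rV[R]_d) (k : nat) (i : 'I_m) : nat :=
  #|[set j : 'I_m | `[< csig_adj N c k i j >]]|.

Definition theta_config (R : realType) (d : nat) (N : 'rV[R]_d -> R)
  (n : nat) : Prop :=
  exists p : 'I_n -> 'rV[R]_d,
    [/\ exists i, p i = 0,
        forall i, N (p i) <= 2
      & forall i j, i <> j -> 1 <= N (p i - p j)].

Definition is_theta (R : realType) (d : nat) (N : 'rV[R]_d -> R) (t : nat) : Prop :=
  theta_config N t /\ forall n, theta_config N n -> (n <= t)%N.

(* Suppose at most one vertex other than c_i has a radius smaller than r_i.
   Fewer than k neighbours of c_i lie at distance < r_i from it. Among the
   other neighbours, a greedy choice (largest radius first) keeps a set I,
   losing a factor at most k, with r_j <= ||c_j - c_l|| for j <> l in I.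
   Since neighbours satisfy ||c_j - c_i|| <= r_i + r_j, the points
   (c_j - c_i) / r_i have norm >= 1, mutual distances >= 1, and mutual
   distances >= (their norm - 1); the radial retraction onto B(o, 2) preserves
   these separations, so with o they form a configuration counted by theta.
   Hence the degree of c_i is < k (|I| + 1) <= k theta, and both vertices of
   smallest radius qualify.
   For theta <= 5^d no volume is needed: if p_1, ..., p_n is such a
   configuration, the sums sum_i 5^(i+1) p_(s_i) over the words s of length M
   are n^M points at mutual distance >= 1 in a ball of radius O(5^M).
   Comparing N with the sup norm and counting grid cells gives
   n^M <= C 5^(d M) for every M, hence n <= 5^d. *)

From HB Require Import structures.
From mathcomp Require Import all_boot all_order all_algebra.
From mathcomp Require Import boolp classical_sets reals zify ring lra.
From mathcomp Require Import topology normedtype derive.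
Set Implicit Arguments. Unset Strict Implicit. Unset Printing Implicit Defensive.
Import Order.TTheory GRing.Theory Num.Theory numFieldNormedType.Exports.
Local Open Scope ring_scope.

Section NormFacts.
Variables (R : realType) (d : nat) (N : 'rV[R]_d -> R).
Hypothesis hN : is_norm N.

Lemma NZ a x : N (a *: x) = `|a| * N x.
Proof. by case: hN. Qed.

Lemma N_triangle x y : N (x + y) <= N x + N y.
Proof. by case: hN. Qed.

Lemma N0 : N 0 = 0.
Proof. by rewrite -(scale0r 0) NZ normr0 mul0r. Qed.

Lemma NN x : N (- x) = N x.
Proof. by rewrite -scaleN1r NZ normrN normr1 mul1r. Qed.

Lemma N_distC x y : N (x - y) = N (y - x).
Proof. by rewrite -NN opprB. Qed.

Lemma NZ_ge0 a x : 0 <= a -> N (a *: x) = a * N x.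
Proof. by move=> ha; rewrite NZ ger0_norm. Qed.

Lemma N_ge0 x : 0 <= N x.
Proof.
have := N_triangle x (- x); rewrite subrr N0 NN -mulr2n.
by rewrite pmulrn_lge0.
Qed.

Lemma N_gt0 x : x != 0 -> 0 < N x.
Proof.
move=> x0; rewrite lt_def N_ge0 andbT; apply: contra x0 => /eqP.
by case: hN => + _ _ => /[apply] ->.
Qed.

Lemma N_dist_triangle x y z : N (x - z) <= N (x - y) + N (y - z).
Proof. by have := N_triangle (x - y) (y - z); rewrite addrA subrK. Qed.

Lemma N_lerB x y : N x - N y <= N (x - y).
Proof. by rewrite lerBlDr; have := N_triangle (x - y) y; rewrite subrK. Qed.

End NormFacts.

Section NormEquivalence.
Variables (R : realType) (d : nat).

Lemma mx_norm_coord_le (x : 'rV[R]_d) i : `|x ord0 i| <= `|x|.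
Proof.
rewrite [X in _ <= X]mx_normrE.
exact: (le_bigmax _ (fun ij : 'I_1 * 'I_d => `|x ij.1 ij.2|) (ord0, i)).
Qed.

Lemma mx_norm_lt (x : 'rV[R]_d) e :
  0 < e -> (forall i, `|x ord0 i| < e) -> `|x| < e.
Proof.
move=> e0 h; rewrite [X in X < _]mx_normrE; apply/bigmax_ltP; split => // -[a b] _ /=.
by rewrite (ord1 a).
Qed.

Variable N : 'rV[R]_d -> R.
Hypothesis hN : is_norm N.

Lemma N_sum_le (I : Type) (r : seq I) (F : I -> 'rV[R]_d) :
  N (\sum_(i <- r) F i) <= \sum_(i <- r) N (F i).
Proof.
elim/big_ind2: _ => [|a b a' b' h1 h2|//]; first by rewrite (N0 hN).
exact: le_trans (N_triangle hN b b') (lerD h1 h2).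
Qed.

Lemma N_le_mx_norm : exists2 b, 0 < b & forall x, N x <= b * `|x|.
Proof.
exists (1 + \sum_(j < d) N (delta_mx 0 j)).
  by rewrite ltr_wpDr // sumr_ge0 // => j _; apply: N_ge0.
move=> x; rewrite {1}(row_sum_delta x); apply: le_trans (N_sum_le _ _) _.
rewrite mulrDl mul1r mulr_suml; apply: ler_wpDl; first exact: normr_ge0.
apply: ler_sum => j _; rewrite (NZ hN) mulrC.
by apply: ler_wpM2l; [apply: N_ge0 | apply: mx_norm_coord_le].
Qed.

Lemma N_continuous : continuous N.
Proof.
have [b b0 hb] := N_le_mx_norm.
(* [cvgrPdist_lt] needs this instance in context for the matrix topology. *)
move=> x; have Fx : Filter (nbhs x) := nbhs_filter x.
apply/cvgrPdist_lt => e e0.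
apply/(@nbhs_normP R 'rV[R]_d x); exists (e / b); first by rewrite /= divr_gt0.
move=> y /= hy.
have hxy : `|N x - N y| <= N (x - y).
  by rewrite ler_norml (N_lerB hN) andbT lerNl opprB (N_distC hN) (N_lerB hN).
apply: le_lt_trans hxy _; apply: le_lt_trans (hb _) _.
by rewrite -ltr_pdivlMl // mulrC.
Qed.

(* The minimum of N on the compact unit sphere of the sup norm. *)
Lemma mx_norm_le_N : (0 < d)%N -> exists2 a, 0 < a & forall x, a * `|x| <= N x.
Proof.
move=> d0; set S := [set x : 'rV[R]_d | `|x| = 1]%classic.
have S0 : (S !=set0)%classic.
  have v0 : const_mx 1 != 0 :> 'rV[R]_d.
    apply/eqP => /matrixP /(_ ord0 (Ordinal d0)); rewrite !mxE => /eqP.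
    by rewrite oner_eq0.
  exists (`|const_mx 1 : 'rV[R]_d|^-1 *: const_mx 1).
  by rewrite /S /= normrZ normfV normr_id mulVf // normr_eq0.
have Scompact : compact S.
  apply: bounded_closed_compact.
    by exists 1; split => // M hM y /= ->; apply: ltW.
  have -> : S = (Num.norm @^-1` [set x : R | x = 1])%classic by [].
  apply: preimage_closed; last exact: closed_eq.
  by move=> y _; apply: norm_continuous.
have NS : {within S, continuous N}%classic.
  by apply: continuous_subspaceT; apply: N_continuous.
have [z + hmin] := EVT_min_rV S0 Scompact NS; rewrite inE /S /= => z1.
exists (N z).
  by apply: (N_gt0 hN); apply: contra_eqN z1 => /eqP ->; rewrite normr0 eq_sym oner_eq0.
move=> x; have [->|x0] := eqVneq x 0; first by rewrite normr0 mulr0 (N0 hN).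
have nx : 0 < `|x| by rewrite normr_gt0.
have := hmin (`|x|^-1 *: x).
rewrite inE /S /= normrZ normfV normr_id mulVf ?gt_eqF // => /(_ erefl).
by rewrite (NZ hN) normfV normr_id -ler_pdivlMr // mulrC.
Qed.

End NormEquivalence.

Lemma card_separated_le_grid (R : realType) (d : nat) (T : finType)
    (q : T -> 'rV[R]_d) (B e : R) (K : nat) :
  0 < e -> (forall a, `|q a| <= B) ->
  (forall a b, a != b -> e <= `|q a - q b|) -> 2 * B / e <= K%:R ->
  (#|T| <= K.+1 ^ d)%N.
Proof.
move=> e0 hB hsep hK.
pose y a i := (q a ord0 i + B) / e.
have hy a i : 0 <= y a i <= K%:R.
  have := le_trans (mx_norm_coord_le (q a) i) (hB a); rewrite ler_norml => /andP[h1 h2].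
  apply/andP; split; first by rewrite divr_ge0 ?(ltW e0) //; lra.
  by apply: le_trans hK; rewrite ler_pM2r ?invr_gt0 //; lra.
have trunc_le a i : (Num.truncn (y a i) <= K)%N.
  by rewrite truncn_le_nat (le_lt_trans (proj2 (andP (hy a i)))) // ltr_nat.
pose cell a : {ffun 'I_d -> 'I_K.+1} := [ffun i => inord (Num.truncn (y a i))].
suff /leq_card : injective cell by rewrite card_ffun !card_ord.
move=> a b hab; apply/eqP; apply: contraT => /hsep; apply: contraLR => _.
rewrite -ltNge; apply: mx_norm_lt => // i; rewrite !mxE.
have := congr1 (fun g : {ffun 'I_d -> 'I_K.+1} => val (g i)) hab.
rewrite /cell !ffunE /= !inordK ?ltnS ?trunc_le // => hab_i.
have /andP[ha1 ha2] := truncn_itv (proj1 (andP (hy a i))).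
have /andP[hb1 hb2] := truncn_itv (proj1 (andP (hy b i))).
rewrite hab_i -natr1 in ha1 ha2; rewrite -natr1 in hb2.
have -> : q a ord0 i - q b ord0 i = e * (y a i - y b i).
  by rewrite /y -mulrBl mulrC -mulrA mulVf ?gt_eqF // mulr1 opprD addrACA subrr addr0.
rewrite normrM gtr0_norm // -{2}(mulr1 e) ltr_pM2l // ltr_norml.
by apply/andP; split; lra.
Qed.

Section Base5Sums.
Variables (R : realType) (d : nat) (N : 'rV[R]_d -> R) (n : nat) (p : 'I_n -> 'rV[R]_d).
Hypothesis hN : is_norm N.
Hypothesis p_le2 : forall a, N (p a) <= 2.
Hypothesis p_sep : forall a b, a <> b -> 1 <= N (p a - p b).

Fixpoint base5_sum (s : seq 'I_n) : 'rV[R]_d :=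
  if s is a :: s' then (5 ^ (size s').+1)%:R *: p a + base5_sum s' else 0.

Lemma N_base5_sum_le s : 2 * N (base5_sum s) <= 5 * ((5 ^ size s)%:R - 1).
Proof.
elim: s => [|a s IH] /=; first by rewrite (N0 hN) expn0 subrr !mulr0.
have := N_triangle hN ((5 ^ (size s).+1)%:R *: p a) (base5_sum s).
rewrite (NZ_ge0 hN) // expnS natrM.
have := p_le2 a; have : 0 <= (5 ^ size s)%:R :> R by [].
move: (5 ^ size s)%:R IH => X IH X0 pa2.
have : 5 * X * N (p a) <= 5 * X * 2 by rewrite ler_wpM2l // mulr_ge0.
lra.
Qed.

(* The leading terms differ by at least [5 * 5 ^ L], while the two tails have
   norm at most [5 * (5 ^ L - 1) / 2] each. *)
Lemma base5_sum_sep s t : size s = size t -> s != t ->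
  1 <= N (base5_sum s - base5_sum t).
Proof.
elim: s t => [|a s IH] [|b t] //= [st] st_neq.
case: (eqVneq a b) st_neq => [<-|ab] st_neq.
  rewrite st opprD addrACA subrr add0r; apply: IH => //.
  by apply: contraNneq st_neq => ->.
have -> : (5 ^ (size s).+1)%:R *: p a + base5_sum s
          - ((5 ^ (size t).+1)%:R *: p b + base5_sum t)
        = (5 ^ (size s).+1)%:R *: (p a - p b) - (base5_sum t - base5_sum s).
  by rewrite st scalerBr opprB opprD addrACA.
apply: le_trans (N_lerB hN _ _).
rewrite (NZ_ge0 hN) // expnS natrM.
have := N_triangle hN (base5_sum t) (- base5_sum s); rewrite (NN hN).
have := N_base5_sum_le s; have := N_base5_sum_le t; rewrite -st.
have := p_sep (elimN eqP ab).
have : 1 <= (5 ^ size s)%:R :> R by rewrite ler1n expn_gt0.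
move: (5 ^ size s)%:R => X X1 pab Nt Ns Nts.
have : 5 * X * 1 <= 5 * X * N (p a - p b) by rewrite ler_wpM2l // mulr_ge0 //; lra.
lra.
Qed.

End Base5Sums.

Lemma bernoulli_nat (a M : nat) : (a ^ M * (a + M) <= a * (a + 1) ^ M)%N.
Proof.
elim: M => [|M IH]; first by rewrite expn0 mul1n addn0 muln1.
rewrite !expnS; move: (a ^ M)%N ((a + 1) ^ M)%N IH => P Q IH; nia.
Qed.

Lemma leq_of_expn_bounded (a n C : nat) :
  (0 < a)%N -> (forall M, n ^ M <= C * a ^ M)%N -> (n <= a)%N.
Proof.
move=> a0 bounded; rewrite leqNgt; apply/negP => an.
have := bernoulli_nat a (C * a).
have : ((a + 1) ^ (C * a) <= n ^ (C * a) <= C * a ^ (C * a))%N.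
  have C0 : (0 < C)%N by have := bounded 0%N; rewrite !expn0 muln1.
  by rewrite bounded andbT leq_exp2r ?addn1 // muln_gt0 C0.
have : (0 < a ^ (C * a))%N by rewrite expn_gt0 a0.
move: (a ^ (C * a))%N ((a + 1) ^ (C * a))%N (n ^ (C * a))%N => P Q Nn; nia.
Qed.

Lemma theta_config_le_pow5 (R : realType) (d n : nat) (N : 'rV[R]_d -> R) :
  is_norm N -> (0 < d)%N -> theta_config N n -> (n <= 5 ^ d)%N.
Proof.
move=> hN d0 [p [_ p_le2 p_sep]].
have [a a0 ha] := mx_norm_le_N hN d0; have [b b0 hb] := N_le_mx_norm hN.
set K := (Num.truncn (5 * b / a)).+1.
have hK : 5 * b / a <= K%:R by apply/ltW/truncnS_gt.
apply: (@leq_of_expn_bounded _ _ (K.+1 ^ d)); first by rewrite expn_gt0.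
move=> M; have : (#|{: M.-tuple 'I_n}| <= (5 ^ M * K).+1 ^ d)%N.
  apply: (@card_separated_le_grid R d (M.-tuple 'I_n) (fun s => base5_sum p s)
            (5 * (5 ^ M)%:R / (2 * a)) b^-1 (5 ^ M * K)); first by rewrite invr_gt0.
  - move=> s; have := N_base5_sum_le hN p_le2 s; rewrite size_tuple.
    have := ha (base5_sum p s); have : 0 <= (5 ^ M)%:R :> R by [].
    move: (base5_sum p s) (5 ^ M)%:R => x X X0 hx hX.
    rewrite ler_pdivlMr ?mulr_gt0 //.
    have -> : `|x| * (2 * a) = 2 * (a * `|x|) by ring.
    lra.
  - move=> s1 s2 s12; rewrite -[X in X <= _]mul1r ler_pdivrMr // mulrC.
    apply: le_trans (hb _).
    apply: (base5_sum_sep hN p_le2 p_sep); first by rewrite !size_tuple.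
    by apply: contra s12 => /eqP /val_inj ->.
  - rewrite invrK natrM.
    have -> : 2 * (5 * (5 ^ M)%:R / (2 * a)) * b = (5 ^ M)%:R * (5 * b / a).
      by field; rewrite gt_eqF.
    by rewrite ler_wpM2l.
rewrite card_tuple card_ord => /leq_trans; apply.
have -> : (K.+1 ^ d * (5 ^ d) ^ M = (5 ^ M * K.+1) ^ d)%N.
  by rewrite expnMn -!expnM mulnC [(M * d)%N]mulnC.
rewrite leq_exp2r // mulnS.
by rewrite -[X in (X <= _)%N]add1n leq_add2r expn_gt0.
Qed.

Lemma exists_theta (R : realType) (d : nat) (N : 'rV[R]_d -> R) :
  is_norm N -> (0 < d)%N -> exists2 t, is_theta N t & (t <= 5 ^ d)%N.
Proof.
move=> hN d0.
have config1 : theta_config N 1.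
  exists (fun _ => 0); split; first by exists ord0.
    by move=> _; rewrite (N0 hN) ler0n.
  by move=> i j; rewrite (ord1 i) (ord1 j).
have le5 n : theta_config N n -> (n <= 5 ^ d)%N by apply: theta_config_le_pow5.
pose P n := `[< theta_config N n >].
have exP : exists n, P n by exists 1%N; apply/asboolP.
have ubP n : P n -> (n <= 5 ^ d)%N by move/asboolP/le5.
case: (ex_maxnP exP ubP) => t /asboolP t_config t_max.
exists t; last exact: le5.
by split => // n n_config; apply: t_max; apply/asboolP.
Qed.

Section Retraction.
Variables (R : realType) (d : nat) (N : 'rV[R]_d -> R).
Hypothesis hN : is_norm N.

Definition retract2 (x : 'rV[R]_d) := if N x <= 2 then x else (2 / N x) *: x.

Lemma N_retract2_outside x : 2 < N x -> N (retract2 x) = 2.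
Proof.
move=> x2; have x0 : 0 < N x by apply: lt_trans x2.
by rewrite /retract2 leNgt x2 /= (NZ_ge0 hN) ?divfK ?gt_eqF // divr_ge0 // ltW.
Qed.

Lemma N_retract2_le2 x : N (retract2 x) <= 2.
Proof.
by case: (leP (N x) 2) => x2; [rewrite /retract2 x2 | rewrite N_retract2_outside].
Qed.

Lemma N_retract2_ge1 x : 1 <= N x -> 1 <= N (retract2 x).
Proof.
case: (leP (N x) 2) => x2; first by rewrite /retract2 x2.
by rewrite N_retract2_outside // ler1n.
Qed.

Lemma N_shrink a y : 0 <= a <= N y -> N (y - (a / N y) *: y) = N y - a.
Proof.
case/andP=> a0 ay; have [y0|y0] := eqVneq (N y) 0.
  have -> : a = 0 by apply/le_anti; rewrite a0 -y0 ay.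
  by rewrite mul0r scale0r subr0 y0 subr0.
have Ny0 : 0 < N y by rewrite lt_def y0 N_ge0.
rewrite -{1}[y]scale1r -scalerBl (NZ_ge0 hN) ?subr_ge0 ?ler_pdivrMr ?mul1r //.
by rewrite mulrBl mul1r divfK.
Qed.

Lemma retract2_sep_mixed x y : N x <= 2 -> 2 < N y -> N y - 1 <= N (x - y) ->
  1 <= N (x - retract2 y).
Proof.
move=> x2 y2 xy; have y0 : 0 < N y by apply: lt_trans y2.
have ry : retract2 y = (2 / N y) *: y by rewrite /retract2 leNgt y2.
have shrink : N (y - retract2 y) = N y - 2.
  by rewrite ry N_shrink // ler0n ltW.
have := N_dist_triangle hN x (retract2 y) y.
rewrite (N_distC hN (retract2 y)) shrink; lra.
Qed.

(* Compare [x] with the point [y'] of the segment [[0, y]] with [N y' = N x]. *)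
Lemma retract2_sep_outside x y : 2 < N x -> N x <= N y -> N y - 1 <= N (x - y) ->
  1 <= N (retract2 x - retract2 y).
Proof.
move=> x2 xy dxy; have x0 : 0 < N x by apply: lt_trans x2.
have y0 : 0 < N y by apply: lt_le_trans xy.
have y2 : 2 < N y by apply: lt_le_trans xy.
set y' := (N x / N y) *: y.
have shrink : N (y - y') = N y - N x.
  by rewrite N_shrink // ltW.
have dxy' : N x - 1 <= N (x - y').
  have := N_dist_triangle hN x y' y; rewrite (N_distC hN y') shrink; lra.
have -> : retract2 x - retract2 y = (2 / N x) *: (x - y').
  rewrite /retract2 leNgt x2 leNgt y2 /= scalerBr /y' scalerA.
  by rewrite mulrA divfK ?gt_eqF.
have s0 : 0 <= 2 / N x by rewrite divr_ge0 // ltW.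
rewrite (NZ_ge0 hN) //; apply: le_trans (ler_wpM2l s0 dxy').
have : 2 / N x <= 1 by rewrite ler_pdivrMr ?mul1r ?ltW.
rewrite mulrBr divfK ?gt_eqF // mulr1; lra.
Qed.

Lemma retract2_sep x y : 1 <= N x -> 1 <= N y -> 1 <= N (x - y) ->
  N x - 1 <= N (x - y) -> N y - 1 <= N (x - y) ->
  1 <= N (retract2 x - retract2 y).
Proof.
move=> x1 y1 dxy1 dx dy.
case: (leP (N x) 2) => x2; case: (leP (N y) 2) => y2.
- by rewrite /retract2 x2 y2.
- by rewrite {1}/retract2 x2; apply: retract2_sep_mixed.
- by rewrite (N_distC hN) {1}/retract2 y2 retract2_sep_mixed // (N_distC hN).
case: (leP (N x) (N y)) => xy; first exact: retract2_sep_outside.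
by rewrite (N_distC hN) retract2_sep_outside ?(ltW xy) // (N_distC hN).
Qed.

(* The points [retract2 (y j / rho)], together with the origin, form a
   configuration counted by theta. *)
Lemma theta_config_shell (T : finType) (I : {set T}) (y : T -> 'rV[R]_d) (rho : R) :
  0 < rho -> {in I, forall j, rho <= N (y j)} ->
  {in I &, forall j l, j != l ->
     rho <= N (y j - y l) /\ N (y j) - rho <= N (y j - y l)} ->
  theta_config N #|I|.+1.
Proof.
move=> rho0 y_far y_sep.
pose x j := rho^-1 *: y j.
have Nx j : N (x j) = N (y j) / rho by rewrite (NZ_ge0 hN) ?invr_ge0 ?ltW // mulrC.
have Nxx j l : N (x j - x l) = N (y j - y l) / rho.
  by rewrite -scalerBr (NZ_ge0 hN) ?invr_ge0 ?ltW // mulrC.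
have x_far j : j \in I -> 1 <= N (x j).
  by move=> jI; rewrite Nx ler_pdivlMr ?mul1r ?y_far.
have x_sep j l : j \in I -> l \in I -> j != l ->
    1 <= N (x j - x l) /\ N (x j) - 1 <= N (x j - x l).
  move=> jI lI jl; have [h1 h2] := y_sep j l jI lI jl.
  rewrite Nx Nxx ler_pdivlMr // mul1r; split => //.
  by rewrite -[1](divff (lt0r_neq0 rho0)) -mulrBl ler_pM2r ?invr_gt0.
pose p (a : 'I_#|I|.+1) :=
  if unlift ord0 a is Some b then retract2 (x (@enum_val _ (mem I) b)) else 0.
exists p; split; first by exists ord0; rewrite /p unlift_none.
  move=> a; rewrite /p; case: unlift => [b|]; first exact: N_retract2_le2.
  by rewrite (N0 hN) ler0n.
move=> a a'; rewrite /p; case: unliftP => [b ->|->]; case: unliftP => [b' ->|->];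
  rewrite ?liftK ?unlift_none //.
- move=> bb'; have jl : enum_val b != enum_val b'.
    by apply: contraPneq bb' => /enum_val_inj ->.
  have [jI lI] := (enum_valP b, enum_valP b').
  have [dxy dx] := x_sep _ _ jI lI jl.
  move: (jl); rewrite eq_sym => /(x_sep _ _ lI jI) [_].
  rewrite (N_distC hN) => dy.
  by apply: retract2_sep => //; apply: x_far.
- by move=> _; rewrite subr0 N_retract2_ge1 // x_far // enum_valP.
- by move=> _; rewrite sub0r (NN hN) N_retract2_ge1 // x_far // enum_valP.
Qed.

End Retraction.

Lemma exists_argmax (R : realDomainType) (T : finType) (S : {set T}) (f : T -> R) :
  (0 < #|S|)%N -> exists2 j, j \in S & {in S, forall l, f l <= f j}.
Proof.
rewrite card_gt0 => /set0Pn [j1 j1S].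
by case: (@arg_maxP _ R _ j1 (mem S) f j1S) => j jS jmax; exists j.
Qed.

Lemma exists_argmin (R : realDomainType) (T : finType) (S : {set T}) (f : T -> R) :
  (0 < #|S|)%N -> exists2 j, j \in S & {in S, forall l, f j <= f l}.
Proof.
rewrite card_gt0 => /set0Pn [j1 j1S].
by case: (@arg_minP _ R _ j1 (mem S) f j1S) => j jS jmin; exists j.
Qed.

Section Radii.
Variables (R : realType) (d m k : nat).
Variables (N : 'rV[R]_d -> R) (c : 'I_m -> 'rV[R]_d).
Hypothesis hN : is_norm N.
Hypothesis k0 : (0 < k)%N.

Lemma rk_le i r : 0 <= r -> (k <= nb_within N c i r)%N -> rk N c k i <= r.
Proof. by move=> r0 kr; apply: ge_inf; [exists 0 => ? [] | split]. Qed.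

Lemma card_strictly_within_rk_lt i :
  (#|[set j | (j != i) && (N (c i - c j) < rk N c k i)%R]| < k)%N.
Proof.
set S := [set j | _]; rewrite ltnNge; apply/negP => kS.
have [j jS jmax] := @exists_argmax R _ S (fun j => N (c i - c j)) (leq_trans k0 kS).
have : rk N c k i <= N (c i - c j).
  apply: rk_le; first exact: N_ge0.
  apply: leq_trans kS _; apply: subset_leq_card; apply/fintype.subsetP => l lS.
  by move: (lS); rewrite !inE => /andP[-> _] /=; apply: jmax.
by move: jS; rewrite inE ltNge => /andP[_ /negP].
Qed.

Lemma csig_adj_dist_le i j :
  csig_adj N c k i j -> N (c i - c j) <= rk N c k i + rk N c k j.
Proof.
case=> _ [x [xi xj]]; apply: le_trans (N_dist_triangle hN _ x _) _.
by rewrite (N_distC hN); apply: lerD.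
Qed.

Hypothesis hc : injective c.
Hypothesis km : (k < m)%N.

(* Every admissible radius reaches some other centre, and distinct centres are
   at positive distance. *)
Lemma rk_gt0 i : 0 < rk N c k i.
Proof.
have [|j0 j0i j0min] := @exists_argmin R _ [set~ i] (fun j => N (c i - c j)).
  by rewrite cardsC1 card_ord; move: k0 km; clear; lia.
have : 0 < N (c i - c j0).
  apply: (N_gt0 hN); rewrite subr_eq0; apply: contraTneq j0i => /hc ->.
  by rewrite !inE eqxx.
move/lt_le_trans; apply; apply: lb_le_inf.
  exists (\sum_j N (c i - c j)); split; first by apply: sumr_ge0 => j _; apply: N_ge0.
  apply: leq_trans (_ : (#|[set~ i]| <= _)%N).
    by rewrite cardsC1 card_ord; move: km; clear; lia.
  apply: subset_leq_card; apply/fintype.subsetP => j; rewrite !inE => ji.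
  rewrite ji (bigD1 j) //= lerDl.
  by apply: sumr_ge0 => l _; apply: N_ge0.
move=> r [r0 kr]; have := leq_trans k0 kr; rewrite card_gt0.
case/set0Pn => j; rewrite inE => /andP[ji jr].
by apply: le_trans (j0min _ _) jr; rewrite !inE.
Qed.

End Radii.

Section Greedy.
Variables (R : realDomainType) (T : finType) (k : nat).
Variables (dist : T -> T -> R) (r : T -> R).
Hypothesis distC : forall u v, dist u v = dist v u.
Hypothesis few_close : forall v, (#|[set u | (u != v) && (dist v u < r v)%R]| < k)%N.

Definition radius_separated (I : {set T}) :=
  {in I &, forall j l, j != l -> r j <= dist j l}.

(* Repeatedly keep a point [v] of largest radius and discard the fewer than [k]
   points within distance [r v] of it. *)
Lemma greedy_separated (A : {set T}) :
  exists I : {set T}, [/\ I \subset A, (#|A| <= k * #|I|)%N & radius_separated I].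
Proof.
move: {2}#|A|.+1 (ltnSn #|A|) => n; elim: n A => // n IH A An.
have [A0|] := posnP #|A|.
  exists finset.set0; split; rewrite ?finset.sub0set ?A0 //.
  by move=> j l; rewrite inE.
case/(exists_argmax r) => v vA vmax.
set C := [set u in A | (u != v) && (dist v u < r v)].
have A'A : (#|A :\: (v |: C)| < #|A|)%N.
  apply: (@leq_ltn_trans #|A :\ v|); last by rewrite (cardsD1 v A) vA.
  by apply/subset_leq_card/finset.setDS; rewrite finset.sub1set !inE eqxx.
have [I [IA AI sepI]] := IH _ (leq_trans A'A An).
have vI : v \notin I by apply/negP => /(fintype.subsetP IA); rewrite !inE eqxx.
have C_lt : (#|C| < k)%N.
  apply: leq_ltn_trans (few_close v); apply/subset_leq_card/fintype.subsetP => u.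
  by rewrite !inE => /andP[_ ->].
exists (v |: I); split.
- rewrite finset.subUset finset.sub1set vA.
  exact: fintype.subset_trans IA (finset.subsetDl _ _).
- rewrite cardsU1 vI mulnDr muln1 addnC.
  have : A \subset (A :\: (v |: C)) :|: (v |: C).
    apply/fintype.subsetP => u uA; rewrite !inE uA.
    by case: (u == v); case: (dist v u < r v).
  move/subset_leq_card/leq_trans; apply; apply: leq_trans (leq_card_setU _ _) _.
  by rewrite leq_add // cardsU1 (leq_trans (leq_add (leq_b1 _) (leqnn _))).
- have far_v u : u \in I -> r v <= dist v u /\ r u <= dist v u.
    move/(fintype.subsetP IA); rewrite !inE negb_or => /andP[/andP[uv uC] uA].
    move: uC; rewrite uA uv /= -leNgt => ruv.
    by split => //; apply: le_trans ruv; apply: vmax.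
  move=> j l; rewrite !inE => /orP[/eqP->|jI] /orP[/eqP->|lI]; rewrite ?eqxx //.
  + by move=> _; case: (far_v l lI).
  + by move=> _; rewrite distC; case: (far_v j jI).
  + exact: sepI.
Qed.

End Greedy.

Section Degree.
Variables (R : realType) (d m k : nat).
Variables (N : 'rV[R]_d -> R) (c : 'I_m -> 'rV[R]_d).
Hypothesis hN : is_norm N.
Hypothesis k0 : (0 < k)%N.
Hypothesis hc : injective c.
Hypothesis km : (k < m)%N.

Local Notation r := (rk N c k).

Definition far_nbrs i := [set j | `[< csig_adj N c k i j >] && (r i <= N (c i - c j))].

Definition rk_among_two_smallest i :=
  forall j l, j != l -> j != i -> l != i -> r i <= r j \/ r i <= r l.

Lemma csig_deg_lt_far i : (csig_deg N c k i < #|far_nbrs i| + k)%N.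
Proof.
set close := [set j | (j != i) && (N (c i - c j) < r i)%R].
apply: (@leq_ltn_trans (#|far_nbrs i| + #|close|)).
  apply: leq_trans (leq_card_setU _ _); apply/subset_leq_card/fintype.subsetP => j.
  rewrite !inE => adj; rewrite asboolT //=.
  have [//|_] := leP (r i) (N (c i - c j)); rewrite andbT.
  by case: adj => ij _; apply/eqP => ji; apply: ij.
by rewrite ltn_add2l (card_strictly_within_rk_lt c hN k0).
Qed.

Lemma theta_config_far i (I : {set 'I_m}) : rk_among_two_smallest i ->
  I \subset far_nbrs i -> radius_separated (fun j l => N (c j - c l)) r I ->
  theta_config N #|I|.+1.
Proof.
move=> low IF sepI.
have far j : j \in I -> csig_adj N c k i j /\ r i <= N (c i - c j).
  by move/(fintype.subsetP IF); rewrite inE => /andP[/asboolP adj fr].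
apply: (@theta_config_shell _ _ _ hN _ I (fun j => c j - c i) (r i)).
- exact: rk_gt0.
- by move=> j /far[_]; rewrite (N_distC hN).
move=> j l jI lI jl /=; rewrite opprB addrA subrK.
have [adj _] := far j jI; have [[il _] _] := far l lI.
have ji : j != i by case: adj => ij _; apply/eqP => ji; apply: ij.
have li : l != i by apply/eqP => li; apply: il.
split.
  have [rj|rl] := low j l jl ji li; first exact: le_trans rj (sepI j l jI lI jl).
  by apply: (le_trans rl); rewrite (N_distC hN); apply: sepI; rewrite // eq_sym.
rewrite lerBlDl (N_distC hN); apply: le_trans (csig_adj_dist_le hN adj) _.
by rewrite lerD2l; apply: sepI.
Qed.

Lemma csig_deg_lt_theta i t : is_theta N t -> rk_among_two_smallest i ->
  (csig_deg N c k i < t * k)%N.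
Proof.
move=> [_ t_max] low.
have [I [IF farI sepI]] := @greedy_separated _ _ k (fun j l => N (c j - c l)) r
  (fun j l => N_distC hN (c j) (c l)) (card_strictly_within_rk_lt c hN k0) (far_nbrs i).
have It := t_max _ (theta_config_far low IF sepI).
apply: leq_trans (csig_deg_lt_far i) _.
rewrite mulnC; apply: leq_trans (leq_mul (leqnn k) It).
by rewrite mulnS addnC leq_add2l.
Qed.

Lemma csig_two_low_degree t : is_theta N t ->
  exists u v, [/\ u != v, (csig_deg N c k u < t * k)%N & (csig_deg N c k v < t * k)%N].
Proof.
move=> ht.
have [|i1 _ i1min] := @exists_argmin R _ [set: 'I_m] r.
  by rewrite cardsT card_ord; move: k0 km; clear; lia.
have [|i2 i2i1 i2min] := @exists_argmin R _ [set~ i1] r.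
  by rewrite cardsC1 card_ord; move: k0 km; clear; lia.
exists i1, i2; split; first by rewrite eq_sym -in_setC1.
  by apply: csig_deg_lt_theta ht _ => j l _ _ _; left; apply: i1min; rewrite inE.
apply: csig_deg_lt_theta ht _ => j l jl j2 l2.
have [ji1|ji1] := eqVneq j i1.
  by right; apply: i2min; rewrite !inE -ji1 eq_sym.
by left; apply: i2min; rewrite !inE.
Qed.

End Degree.

Lemma injective_rV0 (R : realType) (m : nat) (c : 'I_m -> 'rV[R]_0) :
  injective c -> (m <= 1)%N.
Proof.
move=> hc; rewrite leqNgt; apply/negP => m1.
have c01 : c (Ordinal (ltnW m1)) = c (Ordinal m1) by rewrite [LHS]thinmx0 [RHS]thinmx0.
by have /(congr1 val) := hc _ _ c01.
Qed.

Unset Implicit Arguments.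

Theorem mainTheorem1 (R : realType) (d : nat) (N : 'rV[R]_d -> R)
  (k m : nat) (c : 'I_m -> 'rV[R]_d) :
  is_norm N -> (1 <= k)%N -> (2 <= m)%N -> (k.+1 <= m)%N -> injective c ->
  exists t : nat,
    [/\ is_theta N t,
        exists u v : 'I_m, [/\ u != v,
                             (csig_deg N c k u < t * k)%N
                           & (csig_deg N c k v < t * k)%N]
      & (t * k <= 5 ^ d * k)%N].
Proof.
(* [2 <= m] already follows from [1 <= k < m]. *)
move=> hN k0 _ km hc.
have d0 : (0 < d)%N.
  by case: d N c hN hc => // N c _ /injective_rV0; move: k0 km; clear; lia.
have [t ht t5] := exists_theta hN d0.
exists t; split => //; first exact: csig_two_low_degree.
by rewrite leq_mul2r t5 orbT.
Qed.
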